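(* Let $(G,t)$ be an infinite biosphere. Then: (1) $\mathrm{CONV}$ is upward generic; (2) $\mathrm{CA}$ is upward generic; (3) $\mathrm{REF}$ is upward generic; (4) $\mathrm{IAP}\cap\mathrm{CONV}\cap\mathrm{CA}\cap\mathrm{REF}$ is upward generic.
   Context: An infinite biosphere is a directed graph $G$ together with a function $t$ assigning a real number $t(v)$ to each vertex, such that: (1) if $v$ is a parent of $w$ (edge from $v$ to $w$) then $t(v)<t(w)$; (2) for every $r\in\mathbb R$ at most finitely many vertices $v$ have $t(v)<r$; (3) every vertex has finitely many children; (4) $G$ is infinite. $v$ is an ancestor of $w$ (and $w$ a descendant of $v$) if there is a directed path $v=v_1,\dots,v_n=w$ with $n>1$. A $G$-subset is a set of vertices. Define the following sets of $G$-subsets: $\mathrm{IAP}$: those $S$ such that no $v\in S$ has both infinitely many descendants in $S$ and infinitely many non-descendants in $S$ (identical ancestor point axiom). $\mathrm{CONV}$: those $S$ such that every $v\in G$ having an ancestor in $S$ and a descendant in $S$ lies in $S$. $\mathrm{CA}$: those $S$ for which there exists $v\in S$ such that every $w\in S$ with $w\neq v$ is a descendant of $v$ (common ancestor property). $\mathrm{REF}$: those $S$ such that every $v\in S$ which has infinitely many descendants in $G$ has infinitely many descendants in $S$ (reflection property). For a nonempty linear order $(X,<)$, an ascending chain of $G$-subsets indexed by $X$ is a family $\{C_\alpha\}_{\alpha\in X}$ with $C_\alpha\subseteq C_\beta$ whenever $\alpha<\beta$. A set $T$ of $G$-subsets is upward generic if for every ascending chain $\{C_\alpha\}_{\alpha\in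 X}$ of nonempty $G$-subsets with each $C_\alpha\in T$, $\bigcup_\alpha C_\alpha\in T$. *)

From Stdlib Require Import Reals List Relations.
Open Scope R_scope.

Definition finite_pred {V : Type} (P : V -> Prop) : Prop :=
  exists l : list V, forall x, P x -> In x l.

Definition infinite_pred {V : Type} (P : V -> Prop) : Prop := ~ finite_pred P.

(* A directed graph is given by a vertex type V and an edge relation E:
   E v w means "v is a parent of w" (edge from v to w). *)
Definition is_infinite_biosphere (V : Type) (E : V -> V -> Prop) (t : V -> R) : Prop :=
  (forall v w, E v w -> t v < t w) /\
  (forall r : R, finite_pred (fun v => t v < r)) /\
  (forall v, finite_pred (fun w => E v w)) /\
  infinite_pred (fun _ : V => True).

Definition ancestor {V : Type} (E : V -> V -> Prop) : V -> V -> Prop :=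
  clos_trans V E.

Definition gsubset (V : Type) := V -> Prop.

Definition IAP {V : Type} (E : V -> V -> Prop) (S : gsubset V) : Prop :=
  forall v, S v ->
    ~ (infinite_pred (fun w => S w /\ ancestor E v w) /\
       infinite_pred (fun w => S w /\ ~ ancestor E v w)).

Definition CONV {V : Type} (E : V -> V -> Prop) (S : gsubset V) : Prop :=
  forall v, (exists a, S a /\ ancestor E a v) -> (exists d, S d /\ ancestor E v d) -> S v.

Definition CA {V : Type} (E : V -> V -> Prop) (S : gsubset V) : Prop :=
  exists v, S v /\ forall w, S w -> w <> v -> ancestor E v w.

Definition REF {V : Type} (E : V -> V -> Prop) (S : gsubset V) : Prop :=
  forall v, S v -> infinite_pred (fun w => ancestor E v w) ->
    infinite_pred (fun w => S w /\ ancestor E v w).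

Definition strict_linear_order {X : Type} (lt : X -> X -> Prop) : Prop :=
  (forall a, ~ lt a a) /\
  (forall a b c, lt a b -> lt b c -> lt a c) /\
  (forall a b, lt a b \/ a = b \/ lt b a).

Definition upward_generic {V : Type} (T : gsubset V -> Prop) : Prop :=
  forall (X : Type) (lt : X -> X -> Prop), strict_linear_order lt -> inhabited X ->
  forall C : X -> gsubset V,
    (forall a b, lt a b -> forall v, C a v -> C b v) ->
    (forall a, exists v, C a v) ->
    (forall a, T (C a)) ->
    T (fun v => exists a, C a v).

From Stdlib Require Import Reals.
From Stdlib Require Import Classical List Relations Lra.

(* Any two members of a chain lie in a common member, which gives CONV for the
   union; REF is inherited directly.  For CA, the roots of later members can
   only drop strictly in t; as only finitely many vertices have t below a given
   value, a root of minimal t is the root of all later members.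
   For IAP, let u be the root of the union S and let v in S have infinitely
   many descendants; fix a member C_N containing u and v.  IAP, REF and CONV in
   the members force every w in S with infinitely many descendants into C_N.
   A non-descendant w of v in S outside C_N thus has finitely many descendants,
   and on a path from u to w the last vertex with infinitely many descendants is
   one of the finitely many non-descendants of v in C_N.  Hence w lies in the
   finite descendant set of one of finitely many children of those vertices. *)

Section Finiteness.
Context {V : Type}.

Lemma finite_pred_mono (P Q : V -> Prop) :
  (forall x, P x -> Q x) -> finite_pred Q -> finite_pred P.
Proof. intros HPQ [l Hl]. exists l. auto. Qed.

Lemma infinite_pred_mono (P Q : V -> Prop) :
  (forall x, P x -> Q x) -> infinite_pred P -> infinite_pred Q.
Proof. intros HPQ HP HQ. exact (HP (finite_pred_mono P Q HPQ HQ)). Qed.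

Lemma finite_pred_or (P Q : V -> Prop) :
  finite_pred P -> finite_pred Q -> finite_pred (fun x => P x \/ Q x).
Proof.
  intros [l1 H1] [l2 H2]. exists (l1 ++ l2).
  intros x [Hx|Hx]; apply in_or_app; auto.
Qed.

Lemma finite_pred_bigunion {I : Type} (A : I -> Prop) (P : I -> V -> Prop) :
  finite_pred A -> (forall i, A i -> finite_pred (P i)) ->
  finite_pred (fun w => exists i, A i /\ P i w).
Proof.
  intros [l Hl] HP.
  apply finite_pred_mono with (fun w => exists i, In i l /\ A i /\ P i w).
  { intros w [i [Ai Hw]]. eauto. }
  clear Hl. induction l as [|i l IH].
  - exists nil. intros w [j [[] _]].
  - apply finite_pred_mono
      with (fun w => (A i /\ P i w) \/ exists j, In j l /\ A j /\ P j w).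
    { intros w [j [[<-|Hj] Hw]]; [left|right; exists j]; tauto. }
    apply finite_pred_or; [|exact IH].
    destruct (classic (A i)) as [Ai|nAi].
    + apply finite_pred_mono with (P i); [tauto|exact (HP i Ai)].
    + exists nil. tauto.
Qed.

Lemma infinite_minus_finite (P Q : V -> Prop) :
  infinite_pred P -> finite_pred Q -> exists x, P x /\ ~ Q x.
Proof.
  intros HP HQ. apply NNPP. intros Hno. apply HP.
  apply finite_pred_mono with Q; [|exact HQ].
  intros x Px. apply NNPP. eauto.
Qed.

Lemma finite_pred_has_min (f : V -> R) (P : V -> Prop) :
  finite_pred P -> (exists x, P x) ->
  exists m, P m /\ forall x, P x -> f m <= f x.
Proof.
  intros [l Hl]. revert P Hl.
  induction l as [|a l IH]; intros P Hl [x Px].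
  - destruct (Hl x Px).
  - destruct (classic (exists y, P y /\ In y l)) as [Hy|Hy].
    + destruct (IH (fun y => P y /\ In y l) (fun y H => proj2 H) Hy)
        as [m [[Pm _] Hm]].
      assert (Hcover : forall y, P y -> y = a \/ (P y /\ In y l))
        by (intros y Py; destruct (Hl y Py); auto).
      destruct (classic (P a /\ f a < f m)) as [[Pa Ha]|Ha].
      * exists a. split; [exact Pa|]. intros y Py.
        destruct (Hcover y Py) as [->|Hy']; [lra|]. specialize (Hm y Hy'). lra.
      * exists m. split; [exact Pm|]. intros y Py.
        destruct (Hcover y Py) as [->|Hy']; [|auto].
        apply Rnot_lt_le. auto.
    + assert (Hcover : forall y, P y -> y = a).
      { intros y Py. destruct (Hl y Py) as [<-|Hin]; [reflexivity|].
        exfalso. eauto. }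
      rewrite (Hcover x Px) in Px.
      exists a. split; [exact Px|]. intros y Py. rewrite (Hcover y Py). lra.
Qed.

End Finiteness.

Section Descendants.
Context {V : Type} (E : V -> V -> Prop).

Definition is_root (S : gsubset V) (r : V) : Prop :=
  S r /\ forall w, S w -> w <> r -> ancestor E r w.

Lemma clos_rt_eq_or_ancestor x y :
  clos_refl_trans V E x y -> x = y \/ ancestor E x y.
Proof.
  intros Hxy. apply clos_rt_rt1n in Hxy.
  induction Hxy as [|x y z Hxy _ [<-|Hyz]]; [left; reflexivity|right..].
  - apply t_step. exact Hxy.
  - eapply t_trans; [apply t_step; exact Hxy|exact Hyz].
Qed.

Lemma ancestor_step_rt x y z :
  E x y -> clos_refl_trans V E y z -> ancestor E x z.
Proof.
  intros Hxy Hyz. destruct (clos_rt_eq_or_ancestor y z Hyz) as [<-|H].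
  - apply t_step. exact Hxy.
  - eapply t_trans; [apply t_step; exact Hxy|exact H].
Qed.

Lemma ancestor_exit_edge (P : V -> Prop) x w :
  clos_refl_trans V E x w -> P x -> ~ P w ->
  exists q q', clos_refl_trans V E x q /\ P q /\ E q q' /\ ~ P q' /\
               clos_refl_trans V E q' w.
Proof.
  intros Hxw. apply clos_rt_rt1n in Hxw.
  induction Hxw as [x|x y w Hxy Hyw IH]; intros Px nPw; [contradiction|].
  destruct (classic (P y)) as [Py|nPy].
  - destruct (IH Py nPw) as (q & q' & Hyq & Hq).
    exists q, q'. split; [|exact Hq].
    eapply rt_trans; [apply rt_step; exact Hxy|exact Hyq].
  - exists x, y. repeat split; auto using rt_refl, clos_rt1n_rt.
Qed.

Lemma ancestor_lt_time (t : V -> R) :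
  (forall v w, E v w -> t v < t w) -> forall x y, ancestor E x y -> t x < t y.
Proof. intros Ht x y Hxy. induction Hxy; auto. lra. Qed.

Lemma root_of_superset (t : V -> R) (S S' : gsubset V) r r' :
  (forall v w, E v w -> t v < t w) -> (forall v, S v -> S' v) ->
  is_root S r -> is_root S' r' -> r' = r \/ t r' < t r.
Proof.
  intros Ht HSS' [Sr _] [_ Hr']. destruct (classic (r' = r)) as [Heq|Hne]; [auto|].
  right. apply (ancestor_lt_time t Ht), Hr'; auto.
Qed.

Lemma infinite_descendants_rt u v :
  clos_refl_trans V E u v -> infinite_pred (ancestor E v) ->
  infinite_pred (ancestor E u).
Proof. intros Huv. apply infinite_pred_mono. intros w. apply clos_rt_t, Huv. Qed.

Lemma finite_descendants_rt q :
  finite_pred (ancestor E q) -> finite_pred (clos_refl_trans V E q).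
Proof.
  intros [l Hl]. exists (q :: l). intros w Hw.
  destruct (clos_rt_eq_or_ancestor q w Hw) as [<-|H]; [left|right]; auto.
Qed.

Lemma finite_reach_of_children_with_finite_descendants (A : V -> Prop) :
  (forall v, finite_pred (fun w => E v w)) -> finite_pred A ->
  finite_pred (fun w => exists q q', A q /\ E q q' /\
                 finite_pred (ancestor E q') /\ clos_refl_trans V E q' w).
Proof.
  intros Hch HA.
  apply finite_pred_mono with (fun w => exists q, A q /\ exists q', E q q' /\
           (finite_pred (ancestor E q') /\ clos_refl_trans V E q' w)).
  { intros w (q & q' & HAq & Hqq' & Hw). exists q. split; [exact HAq|]. eauto. }
  apply finite_pred_bigunion; [exact HA|]. intros q _.
  apply finite_pred_bigunion; [exact (Hch q)|]. intros q' _.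
  destruct (classic (finite_pred (ancestor E q'))) as [Hf|Hi].
  - apply finite_pred_mono with (clos_refl_trans V E q');
      [tauto|exact (finite_descendants_rt q' Hf)].
  - exists nil. tauto.
Qed.

Lemma CONV_rt_between (S : gsubset V) u w q :
  CONV E S -> S u -> S w ->
  clos_refl_trans V E u q -> ancestor E q w -> S q.
Proof.
  intros Hconv Su Sw Huq Hqw.
  destruct (clos_rt_eq_or_ancestor u q Huq) as [<-|H]; [exact Su|].
  apply Hconv; eauto.
Qed.

Lemma IAP_REF_finite_nondescendants (S : gsubset V) w :
  IAP E S -> REF E S -> S w -> infinite_pred (ancestor E w) ->
  finite_pred (fun y => S y /\ ~ ancestor E w y).
Proof.
  intros Hiap Href Sw Hw. apply NNPP. intros H.
  exact (Hiap w Sw (conj (Href w Sw Hw) H)).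
Qed.

End Descendants.

Section Chains.
Context {V X : Type} (E : V -> V -> Prop) (lt : X -> X -> Prop)
  (C : X -> gsubset V).
Hypothesis lt_linear : strict_linear_order lt.
Hypothesis C_mono : forall a b, lt a b -> forall v, C a v -> C b v.

Definition chain_union : gsubset V := fun v => exists a, C a v.

Lemma chain_upper_bound a b :
  exists c, (forall v, C a v -> C c v) /\ (forall v, C b v -> C c v).
Proof.
  destruct lt_linear as [_ [_ Htri]].
  destruct (Htri a b) as [H|[<-|H]]; [exists b|exists a|exists a];
    split; eauto.
Qed.

Lemma chain_union_both x y :
  chain_union x -> chain_union y -> exists c, C c x /\ C c y.
Proof.
  intros [a Hx] [b Hy]. destruct (chain_upper_bound a b) as [c [Hac Hbc]].
  eauto.
Qed.

Lemma chain_union_CONV : (forall a, CONV E (C a)) -> CONV E chain_union.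
Proof.
  intros HC v [x [Hx Hxv]] [y [Hy Hvy]].
  destruct (chain_union_both x y Hx Hy) as [c [Hcx Hcy]].
  exists c. apply (HC c); eauto.
Qed.

Lemma chain_union_REF : (forall a, REF E (C a)) -> REF E chain_union.
Proof.
  intros HC v [a Hv] Hinf.
  apply infinite_pred_mono with (fun w => C a w /\ ancestor E v w).
  - intros w [Hw Hvw]. split; [exists a|]; assumption.
  - exact (HC a v Hv Hinf).
Qed.

Lemma chain_union_CA (t : V -> R) :
  (forall v w, E v w -> t v < t w) -> (forall r, finite_pred (fun v => t v < r)) ->
  inhabited X -> (forall a, CA E (C a)) -> CA E chain_union.
Proof.
  intros Ht Hbelow [a0] HC. destruct (HC a0) as [r0 Hr0].
  set (P := fun u => (exists a, is_root E (C a) u) /\ t u <= t r0).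
  destruct (finite_pred_has_min t P) as [m [[[g Hm] Hmr0] Hmin]].
  - apply finite_pred_mono with (fun u => t u < t r0 + 1); [|apply Hbelow].
    intros u [_ Hu]. lra.
  - exists r0. split; [exists a0; exact Hr0|lra].
  - assert (Hlater : forall d, (forall v, C g v -> C d v) -> is_root E (C d) m).
    { intros d Hgd. destruct (HC d) as [r Hr].
      destruct (root_of_superset E t _ _ m r Ht Hgd Hm Hr) as [->|Hrm]; [exact Hr|].
      assert (Pr : P r) by (split; [exists d; exact Hr|lra]).
      specialize (Hmin r Pr). lra. }
    exists m. split; [exists g; apply Hm|].
    intros w [a Hw] Hwm. destruct (chain_upper_bound a g) as [d [Had Hgd]].
    apply (Hlater d Hgd); [apply Had; exact Hw|exact Hwm].
Qed.

Section IAP.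
Hypothesis C_IAP : forall a, IAP E (C a).
Hypothesis C_CONV : forall a, CONV E (C a).
Hypothesis C_REF : forall a, REF E (C a).

Lemma chain_member_absorbs N m u w :
  infinite_pred (C N) -> C N u -> C m w -> clos_refl_trans V E u w ->
  infinite_pred (ancestor E w) -> C N w.
Proof.
  intros HNinf Hu Hw Huw Hwinf.
  destruct lt_linear as [_ [_ Htri]].
  destruct (Htri N m) as [HNm|[<-|HmN]]; [|exact Hw|exact (C_mono _ _ HmN w Hw)].
  destruct (infinite_minus_finite _ _ HNinf
              (IAP_REF_finite_nondescendants E _ w (C_IAP m) (C_REF m) Hw Hwinf))
    as [y [Hy Hwy]].
  assert (Hwy' : ancestor E w y).
  { apply NNPP. intros H. apply Hwy. split; [exact (C_mono _ _ HNm y Hy)|exact H]. }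
  exact (CONV_rt_between E _ u y w (C_CONV N) Hu Hy Huw Hwy').
Qed.

Lemma chain_union_IAP :
  (forall v, finite_pred (fun w => E v w)) ->
  CONV E chain_union -> CA E chain_union -> IAP E chain_union.
Proof.
  intros Hch Hconv [u [Hu Hroot]] v Hv [Hdesc Hnondesc]. apply Hnondesc.
  assert (Hrt : forall w, chain_union w -> clos_refl_trans V E u w).
  { intros w Hw. destruct (classic (w = u)) as [->|Hne]; [apply rt_refl|].
    exact (clos_t_clos_rt _ _ _ _ (Hroot w Hw Hne)). }
  destruct (chain_union_both v u Hv Hu) as [N [HvN HuN]].
  assert (Hvinf : infinite_pred (ancestor E v)).
  { apply infinite_pred_mono with (2 := Hdesc). intros w [_ H]. exact H. }
  assert (HNinf : infinite_pred (C N)).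
  { apply infinite_pred_mono with (2 := C_REF N v HvN Hvinf). intros w [H _]. exact H. }
  set (A := fun q => C N q /\ ~ ancestor E v q).
  assert (HA : finite_pred A)
    by exact (IAP_REF_finite_nondescendants E _ v (C_IAP N) (C_REF N) HvN Hvinf).
  apply finite_pred_mono with (fun w => A w \/ exists q q', A q /\ E q q' /\
           finite_pred (ancestor E q') /\ clos_refl_trans V E q' w).
  2: { apply finite_pred_or; [exact HA|].
       exact (finite_reach_of_children_with_finite_descendants E A Hch HA). }
  intros w [Hw Hvw].
  destruct (classic (C N w)) as [HwN|HwN]; [left; split; assumption|right].
  assert (Hwfin : ~ infinite_pred (ancestor E w)).
  { pose proof Hw as [m Hwm]. intros Hwinf.
    exact (HwN (chain_member_absorbs N m u w HNinf HuN Hwm (Hrt w Hw) Hwinf)). }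
  destruct (ancestor_exit_edge E (fun q => infinite_pred (ancestor E q)) u w (Hrt w Hw)
              (infinite_descendants_rt E u v (Hrt v Hv) Hvinf) Hwfin)
    as (q & q' & Huq & Hqinf & Hqq' & Hq'fin & Hq'w).
  assert (Hqw : ancestor E q w) by exact (ancestor_step_rt E q q' w Hqq' Hq'w).
  destruct (CONV_rt_between E _ u w q Hconv Hu Hw Huq Hqw) as [k Hqk].
  exists q, q'. repeat split.
  - exact (chain_member_absorbs N k u q HNinf HuN Hqk Huq Hqinf).
  - intros Hvq. apply Hvw. eapply t_trans; eassumption.
  - exact Hqq'.
  - exact (NNPP _ Hq'fin).
  - exact Hq'w.
Qed.

End IAP.
End Chains.

Theorem mainTheorem5 (V : Type) (E : V -> V -> Prop) (t : V -> R) :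
  is_infinite_biosphere V E t ->
  upward_generic (CONV E) /\
  upward_generic (CA E) /\
  upward_generic (REF E) /\
  upward_generic (fun S => IAP E S /\ CONV E S /\ CA E S /\ REF E S).
Proof.
  intros (Ht & Hbelow & Hch & _).
  split; [|split; [|split]]; intros X lt Hlo HX C Hmono _ HC.
  - exact (chain_union_CONV E lt C Hlo Hmono HC).
  - exact (chain_union_CA E lt C Hlo Hmono t Ht Hbelow HX HC).
  - exact (chain_union_REF E C HC).
  - assert (HCiap : forall a, IAP E (C a)) by apply HC.
    assert (HCconv : forall a, CONV E (C a)) by apply HC.
    assert (HCca : forall a, CA E (C a)) by apply HC.
    assert (HCref : forall a, REF E (C a)) by apply HC.
    pose proof (chain_union_CONV E lt C Hlo Hmono HCconv) as Hconv.
    pose proof (chain_union_CA E lt C Hlo Hmono t Ht Hbelow HX HCca) as Hca.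
    repeat split; [|exact Hconv|exact Hca|exact (chain_union_REF E C HCref)].
    exact (chain_union_IAP E lt C Hlo Hmono HCiap HCconv HCref Hch Hconv Hca).
Qed.
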